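(* Let $c>0$, $\lambda>0$ and define, for $t>0$ and $|x|<ct$, $$p(x,t)=\frac{\lambda\, I_0\!\left(\frac{\lambda}{c}\sqrt{c^2t^2-x^2}\right)}{2c\,\sinh \lambda t}.$$ Then for each $t>0$, $p(\cdot,t)$ is a probability density on $(-ct,ct)$ (i.e. $\int_{-ct}^{ct}p(x,t)\,dx=1$), and $p$ satisfies $$\frac{\partial^2 p}{\partial t^2}+2\lambda\coth(\lambda t)\,\frac{\partial p}{\partial t}= c^2 \frac{\partial^2 p}{\partial x^2}\qquad (t>0,\ |x|<ct).$$
   Context: $I_0(z)=\sum_{k\ge0}\frac{(z/2)^{2k}}{(k!)^2}$ is the modified Bessel function of the first kind of order $0$. *)

From Stdlib Require Import Reals Factorial ClassicalEpsilon.
Open Scope R_scope.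

Definition I0_partial (z : R) (n : nat) : R :=
  sum_f_R0 (fun k => (z / 2) ^ (2 * k) / (INR (fact k)) ^ 2) n.

(* I_0(z) = sum_{k>=0} (z/2)^{2k} / (k!)^2, defined as the limit of the
   partial sums (the series converges for every real z). *)
Definition I0 (z : R) : R :=
  epsilon (inhabits 0) (fun l => Un_cv (I0_partial z) l).

Definition coth (y : R) : R := cosh y / sinh y.

Definition p (c lam : R) (x t : R) : R :=
  lam * I0 (lam / c * sqrt (c ^ 2 * t ^ 2 - x ^ 2)) / (2 * c * sinh (lam * t)).

(* With [alpha = lam^2 / (4 c^2)], [I0 ((lam/c) sqrt Y) = G Y] for the entire series
   [G Y = sum_k alpha^k Y^k / (k!)^2], which solves the Bessel-type equation
   [G' + Y G'' = alpha G].  Hence [p = lam G (c^2 t^2 - x^2) / (2 c sinh (lam t))] on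
   [|x| <= c t], and by the chain rule the equation for [p] reduces to that ODE at
   [Y = c^2 t^2 - x^2].  For the normalisation, [G] is integrated term by term using
   [int_{-T}^{T} (T^2 - x^2)^k dx = 2^(2k+1) (k!)^2 T^(2k+1) / (2k+1)!], giving
   [int_{-T}^{T} G (T^2 - x^2) dx = 2 T sum_k (4 alpha T^2)^k / (2k+1)!], which is
   [2 c sinh (lam t) / lam] for [T = c t]; the exchange of sum and integral is uniform
   because, the coefficients being nonnegative, the tails on [[0, T^2]] are dominated by
   the tail at [T^2]. *)

From Stdlib Require Import Reals Lra Lia Factorial ClassicalEpsilon.
From Coquelicot Require Import Coquelicot.
Open Scope R_scope.

Lemma CV_radius_infinite_ratio (a : nat -> R) (M : R) :
  (forall n, a n <> 0) ->
  (forall n, Rabs (a (S n) / a n) <= M / INR (S n)) ->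
  CV_radius a = p_infty.
Proof.
  intros Ha Hratio. apply CV_radius_infinite_DAlembert; [exact Ha |].
  apply is_lim_seq_le_le with (u := fun _ => 0) (w := fun n => M / INR (S n)).
  - intros n; split; [apply Rabs_pos | apply Hratio].
  - apply is_lim_seq_const.
  - replace (Finite 0) with (Rbar_mult M 0) by (simpl; f_equal; ring).
    apply is_lim_seq_scal_l, (is_lim_seq_incr_1 (fun n => / INR n)).
    replace (Finite 0) with (Rbar_inv p_infty) by reflexivity.
    apply is_lim_seq_inv; [apply is_lim_seq_INR | discriminate].
Qed.

Lemma ex_pseries_infinite_radius (a : nat -> R) (x : R) :
  CV_radius a = p_infty -> ex_pseries a x.
Proof. intros H. apply CV_radius_inside. rewrite H. exact I. Qed.

Lemma is_lim_seq_PSeries (a : nat -> R) (x : R) : ex_pseries a x ->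
  is_lim_seq (sum_f_R0 (fun k => a k * x ^ k)) (PSeries a x).
Proof.
  intros H.
  apply is_lim_seq_ext with (u := sum_n (fun k => scal (pow_n x k) (a k))).
  - intros n. rewrite sum_n_Reals. apply sum_eq. intros i _.
    rewrite pow_n_pow. unfold scal; simpl; unfold mult; simpl. ring.
  - exact (PSeries_correct a x H).
Qed.

Lemma PSeries_nonneg_le (a : nat -> R) (y Y : R) : (forall n, 0 <= a n) ->
  ex_pseries a y -> ex_pseries a Y -> 0 <= y <= Y ->
  0 <= PSeries a y <= PSeries a Y.
Proof.
  intros Ha Ey EY Hy. split.
  - assert (Hl := is_lim_seq_le (fun _ => 0) _ 0 _
      (fun N => cond_pos_sum _ N
         (fun k => Rmult_le_pos _ _ (Ha k) (pow_le _ k (proj1 Hy))))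
      (is_lim_seq_const 0) (is_lim_seq_PSeries a y Ey)).
    exact Hl.
  - assert (Hl : Rbar_le (PSeries a y) (PSeries a Y)).
    { apply (is_lim_seq_le _ _ _ _) with
        (2 := is_lim_seq_PSeries a y Ey) (3 := is_lim_seq_PSeries a Y EY).
      intros N. apply sum_Rle. intros k _.
      apply Rmult_le_compat_l; [apply Ha | apply pow_incr; lra]. }
    exact Hl.
Qed.

Lemma PSeries_tail_le (a : nat -> R) (N : nat) (y Y : R) :
  (forall n, 0 <= a n) -> CV_radius a = p_infty -> 0 <= y <= Y ->
  0 <= PSeries a y - sum_f_R0 (fun k => a k * y ^ k) N <=
       PSeries a Y - sum_f_R0 (fun k => a k * Y ^ k) N.
Proof.
  intros Ha Hr Hy.
  rewrite (PSeries_decr_n a N y), (PSeries_decr_n a N Y)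
    by now apply ex_pseries_infinite_radius.
  assert (E : forall z, ex_pseries (PS_decr_n a (S N)) z).
  { intros z. apply ex_pseries_decr_n; [| now apply ex_pseries_infinite_radius].
    destruct (Req_dec z 0) as [-> | Hz]; [now left | right; exists (/ z)].
    unfold mult, one; simpl. field; exact Hz. }
  assert (Htail := PSeries_nonneg_le (PS_decr_n a (S N)) y Y
     (fun n => Ha _) (E y) (E Y) Hy).
  assert (0 <= y ^ S N <= Y ^ S N) by (split; [apply pow_le | apply pow_incr]; lra).
  split; ring_simplify; nra.
Qed.

Lemma INR_S_pos (n : nat) : 0 < INR (S n).
Proof. apply lt_0_INR; lia. Qed.

Definition bessel_coef (al : R) (n : nat) : R := al ^ n / INR (fact n) ^ 2.

Lemma bessel_coef_S (al : R) (n : nat) :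
  bessel_coef al (S n) = al / INR (S n) ^ 2 * bessel_coef al n.
Proof.
  unfold bessel_coef. rewrite fact_simpl, mult_INR, <- tech_pow_Rmult.
  pose proof (INR_fact_lt_0 n). pose proof (INR_S_pos n).
  field; split; lra.
Qed.

Lemma bessel_coef_pos (al : R) (n : nat) : 0 < al -> 0 < bessel_coef al n.
Proof.
  intros Hal. unfold bessel_coef. pose proof (INR_fact_lt_0 n).
  apply Rdiv_lt_0_compat; apply pow_lt; assumption.
Qed.

Lemma CV_radius_bessel_coef (al : R) : 0 < al -> CV_radius (bessel_coef al) = p_infty.
Proof.
  intros Hal. apply CV_radius_infinite_ratio with (M := al).
  - intros n. pose proof (bessel_coef_pos al n Hal). lra.
  - intros n. rewrite bessel_coef_S.
    pose proof (bessel_coef_pos al n Hal). pose proof (INR_S_pos n).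
    assert (1 <= INR (S n)) by (apply (le_INR 1); lia).
    replace (al / INR (S n) ^ 2 * bessel_coef al n / bessel_coef al n)
      with (al / INR (S n) ^ 2) by (field; split; lra).
    rewrite Rabs_right by (apply Rle_ge, Rlt_le, Rdiv_lt_0_compat; [| apply pow_lt]; lra).
    apply Rmult_le_compat_l; [lra |].
    apply Rinv_le_contravar; [assumption | nra].
Qed.

(* [G al Y = I0 (2 sqrt (al Y))], the Bessel series as a power series in [Y]. *)
Definition G (al : R) : R -> R := PSeries (bessel_coef al).
Definition G' (al : R) : R -> R := PSeries (PS_derive (bessel_coef al)).
Definition G'' (al : R) : R -> R := PSeries (PS_derive (PS_derive (bessel_coef al))).

Section BesselSeries.

Variable al : R.
Hypothesis hal : 0 < al.

Lemma is_derive_G (y : R) : is_derive (G al) y (G' al y).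
Proof. apply is_derive_PSeries. rewrite CV_radius_bessel_coef; easy. Qed.

Lemma is_derive_G' (y : R) : is_derive (G' al) y (G'' al y).
Proof.
  apply is_derive_PSeries. rewrite CV_radius_derive, CV_radius_bessel_coef; easy.
Qed.

Lemma G_ode (y : R) : G' al y + y * G'' al y = al * G al y.
Proof.
  unfold G, G', G''.
  assert (R1 : Rbar_lt (Rabs y) (CV_radius (PS_derive (bessel_coef al))))
    by (rewrite CV_radius_derive, CV_radius_bessel_coef; easy).
  assert (R2 : Rbar_lt (Rabs y) (CV_radius (PS_derive (PS_derive (bessel_coef al)))))
    by (rewrite !CV_radius_derive, CV_radius_bessel_coef; easy).
  rewrite <- PSeries_incr_1, <- PSeries_plus, <- PSeries_scal.
  2: now apply CV_radius_inside.
  2: now apply ex_pseries_incr_1, CV_radius_inside.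
  apply PSeries_ext. intros [| m].
  - change (INR 1 * bessel_coef al 1 + 0 = al * bessel_coef al 0).
    rewrite bessel_coef_S. simpl INR. field.
  - change (INR (S (S m)) * bessel_coef al (S (S m))
            + INR (S m) * (INR (S (S m)) * bessel_coef al (S (S m)))
            = al * bessel_coef al (S m)).
    rewrite (bessel_coef_S al (S m)).
    pose proof (INR_S_pos m). rewrite (S_INR (S m)). field. lra.
Qed.

Lemma G_nonneg (y : R) : 0 <= y -> 0 <= G al y.
Proof.
  intros Hy. assert (E : ex_pseries (bessel_coef al) y)
    by now apply ex_pseries_infinite_radius, CV_radius_bessel_coef.
  refine (proj1 (PSeries_nonneg_le _ y y (fun n => Rlt_le _ _ (bessel_coef_pos al n hal)) E E _)).
  lra.
Qed.

Lemma I0_G (b Y : R) : 0 <= Y -> b ^ 2 = 4 * al -> I0 (b * sqrt Y) = G al Y.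
Proof.
  intros HY Hb.
  assert (Hcv : Un_cv (I0_partial (b * sqrt Y)) (G al Y)).
  { apply is_lim_seq_Reals.
    apply is_lim_seq_ext with (u := sum_f_R0 (fun k => bessel_coef al k * Y ^ k)).
    - intros n. apply sum_eq. intros k _.
      rewrite pow_mult.
      replace ((b * sqrt Y / 2) ^ 2) with (b ^ 2 * (sqrt Y * sqrt Y) / 4) by field.
      rewrite sqrt_sqrt, Hb by lra.
      replace (4 * al * Y / 4) with (al * Y) by field.
      unfold bessel_coef. rewrite Rpow_mult_distr. field. apply INR_fact_neq_0.
    - now apply is_lim_seq_PSeries, ex_pseries_infinite_radius, CV_radius_bessel_coef. }
  unfold I0.
  assert (Ex : exists l, Un_cv (I0_partial (b * sqrt Y)) l) by (exists (G al Y); exact Hcv).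
  exact (UL_sequence _ _ _ (epsilon_spec (inhabits 0) _ Ex) Hcv).
Qed.

End BesselSeries.

(* Primitive of [x |-> (T^2 - x^2)^k] given by the reduction formula
   [(2k+1) P_k = x (T^2 - x^2)^k + 2k T^2 P_(k-1)]. *)
Fixpoint prim_pow (T : R) (k : nat) (x : R) : R :=
  match k with
  | O => x
  | S m => (x * (T ^ 2 - x ^ 2) ^ S m + 2 * INR (S m) * T ^ 2 * prim_pow T m x)
           / (2 * INR (S m) + 1)
  end.

Lemma is_derive_prim_pow (T : R) (k : nat) (x : R) :
  is_derive (prim_pow T k) x ((T ^ 2 - x ^ 2) ^ k).
Proof.
  induction k as [| m IH]; cbn [prim_pow]; auto_derive; auto.
  - exists ((T ^ 2 - x ^ 2) ^ m); exact IH.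
  - replace (Derive (fun y : R => prim_pow T m y) x) with ((T ^ 2 - x ^ 2) ^ m)
      by (symmetry; now apply is_derive_unique).
    replace (T * (T * 1) + - (x * (x * 1))) with (T ^ 2 - x ^ 2) by ring.
    set (u := T ^ 2 - x ^ 2).
    replace (T * (T * 1)) with (u + x ^ 2) by (unfold u; ring).
    clearbody u.
    change (match m with 0%nat => 1 | S _ => INR m + 1 end) with (INR (S m)).
    pose proof (INR_S_pos m).
    destruct m as [| m]; simpl pred; [simpl; field; lra |].
    rewrite <- !tech_pow_Rmult, !S_INR in *. field. lra.
Qed.

Lemma prim_pow_opp (T : R) (k : nat) (x : R) : prim_pow T k (- x) = - prim_pow T k x.
Proof.
  induction k as [| m IH]; cbn [prim_pow]; [ring |].
  rewrite IH. replace ((- x) ^ 2) with (x ^ 2) by ring.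
  pose proof (INR_S_pos m). field. lra.
Qed.

Lemma is_RInt_pow_sub_sqr (T : R) (k : nat) :
  is_RInt (fun x => (T ^ 2 - x ^ 2) ^ k) (- T) T (2 * prim_pow T k T).
Proof.
  replace (2 * prim_pow T k T) with (minus (prim_pow T k T) (prim_pow T k (- T)))
    by (rewrite prim_pow_opp; unfold minus, plus, opp; simpl; ring).
  apply (is_RInt_derive (prim_pow T k)); intros x _; [apply is_derive_prim_pow |].
  apply (ex_derive_continuous (K := R_AbsRing) (V := R_NormedModule)
           (fun x => (T ^ 2 - x ^ 2) ^ k)).
  auto_derive. easy.
Qed.

Definition sinh_coef (n : nat) : R := / INR (fact (2 * n + 1)).

(* [2 P_k(T) = 2^(2k+1) (k!)^2 T^(2k+1) / (2k+1)!] turns [bessel_coef] into [sinh_coef]. *)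
Lemma bessel_coef_prim_pow (al T : R) (k : nat) :
  bessel_coef al k * (2 * prim_pow T k T) = 2 * T * (sinh_coef k * (4 * al * T ^ 2) ^ k).
Proof.
  unfold sinh_coef.
  induction k as [| m IH]; [unfold bessel_coef; simpl; field |].
  rewrite bessel_coef_S. cbn [prim_pow].
  replace (T ^ 2 - T ^ 2) with 0 by ring. rewrite pow_i, Rmult_0_r, Rplus_0_l by lia.
  replace (2 * S m + 1)%nat with (S (S (2 * m + 1))) by lia.
  rewrite (fact_simpl (S (2 * m + 1))), (fact_simpl (2 * m + 1)), !mult_INR.
  pose proof (INR_S_pos m). pose proof (INR_fact_lt_0 (2 * m + 1)).
  transitivity (al / INR (S m) ^ 2 * (2 * INR (S m) * T ^ 2) / (2 * INR (S m) + 1)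
                * (bessel_coef al m * (2 * prim_pow T m T))); [field; lra |].
  rewrite IH, <- (tech_pow_Rmult (4 * al * T ^ 2) m).
  replace (INR (S (S (2 * m + 1)))) with (2 * INR m + 3)
    by (rewrite !S_INR, plus_INR, mult_INR; simpl; ring).
  replace (INR (S (2 * m + 1))) with (2 * INR m + 2)
    by (rewrite !S_INR, plus_INR, mult_INR; simpl; ring).
  rewrite S_INR in *. field. repeat split; lra.
Qed.

Lemma CV_radius_inv_fact_2n (j : nat) :
  CV_radius (fun n => / INR (fact (2 * n + j))) = p_infty.
Proof.
  apply CV_radius_infinite_ratio with (M := 1).
  - intros n. apply Rinv_neq_0_compat, INR_fact_neq_0.
  - intros n.
    replace (2 * S n + j)%nat with (S (S (2 * n + j))) by lia.
    rewrite (fact_simpl (S (2 * n + j))), (fact_simpl (2 * n + j)), !mult_INR.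
    pose proof (INR_fact_lt_0 (2 * n + j)).
    set (F := INR (fact (2 * n + j))) in *.
    replace (INR (S (S (2 * n + j)))) with (2 * INR n + INR j + 2)
      by (rewrite !S_INR, plus_INR, mult_INR; simpl; ring).
    replace (INR (S (2 * n + j))) with (2 * INR n + INR j + 1)
      by (rewrite !S_INR, plus_INR, mult_INR; simpl; ring).
    pose proof (pos_INR n). pose proof (pos_INR j). rewrite S_INR.
    replace (/ ((2 * INR n + INR j + 2) * ((2 * INR n + INR j + 1) * F)) / / F)
      with (/ ((2 * INR n + INR j + 2) * (2 * INR n + INR j + 1)))
      by (field; repeat split; lra).
    rewrite Rabs_right by (apply Rle_ge, Rlt_le, Rinv_0_lt_compat; nra).
    unfold Rdiv. rewrite Rmult_1_l. apply Rinv_le_contravar; nra.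
Qed.

Lemma sinh_PSeries (w : R) : sinh w = w * PSeries sinh_coef (w ^ 2).
Proof.
  assert (Hodd : forall z, ex_pseries sinh_coef z)
    by (intros z; apply ex_pseries_infinite_radius, CV_radius_inv_fact_2n).
  assert (Heven : forall z, ex_pseries (fun n => / INR (fact (2 * n))) z).
  { intros z. apply ex_pseries_ext with (a := fun n => / INR (fact (2 * n + 0))).
    - intros n. now rewrite Nat.add_0_r.
    - apply ex_pseries_infinite_radius, CV_radius_inv_fact_2n. }
  unfold sinh. rewrite !exp_Reals, (PSeries_odd_even _ w), (PSeries_odd_even _ (- w)) by easy.
  replace ((- w) ^ 2) with (w ^ 2) by ring.
  fold sinh_coef. field.
Qed.

Lemma is_RInt_of_uniform_approx (f : R -> R) (g : nat -> R -> R) (e I : nat -> R) (a b l : R) :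
  a <= b -> ex_RInt f a b ->
  (forall N, is_RInt (g N) a b (I N)) ->
  (forall N x, a <= x <= b -> Rabs (g N x - f x) <= e N) ->
  is_lim_seq e 0 -> is_lim_seq I l -> is_RInt f a b l.
Proof.
  intros Hab Ef Hg Hbd He HI.
  set (J := RInt f a b).
  assert (Hdist : forall N, Rabs (I N - J) <= (b - a) * e N).
  { intros N.
    assert (Hm := is_RInt_minus _ _ _ _ _ _ (Hg N) (RInt_correct _ _ _ Ef)).
    replace (I N - J) with (RInt (fun x => minus (g N x) (f x)) a b)
      by exact (is_RInt_unique _ _ _ _ Hm).
    apply abs_RInt_le_const; [exact Hab | eexists; exact Hm | exact (Hbd N)]. }
  assert (HJ : is_lim_seq I J).
  { apply is_lim_seq_le_le with (u := fun N => J - (b - a) * e N)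
                                (w := fun N => J + (b - a) * e N).
    - intros N. specialize (Hdist N). apply Rabs_le_between' in Hdist. lra.
    - replace (Finite J) with (Finite (J - (b - a) * 0)) by (f_equal; ring).
      apply (is_lim_seq_minus' (fun _ => J)); [apply is_lim_seq_const |].
      exact (is_lim_seq_scal_l e (b - a) 0 He).
    - replace (Finite J) with (Finite (J + (b - a) * 0)) by (f_equal; ring).
      apply (is_lim_seq_plus' (fun _ => J)); [apply is_lim_seq_const |].
      exact (is_lim_seq_scal_l e (b - a) 0 He). }
  assert (HlJ : l = J).
  { apply Rbar_finite_eq.
    now rewrite <- (is_lim_seq_unique _ _ HI), (is_lim_seq_unique _ _ HJ). }
  rewrite HlJ. exact (RInt_correct _ _ _ Ef).
Qed.

Section BesselIntegral.

Variables al T : R.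
Hypothesis hal : 0 < al.
Hypothesis hT : 0 <= T.

Lemma is_RInt_bessel_partial (N : nat) :
  is_RInt (fun x => sum_f_R0 (fun k => bessel_coef al k * (T ^ 2 - x ^ 2) ^ k) N) (- T) T
    (2 * T * sum_f_R0 (fun k => sinh_coef k * (4 * al * T ^ 2) ^ k) N).
Proof.
  assert (Hterm : forall k, is_RInt (fun x => bessel_coef al k * (T ^ 2 - x ^ 2) ^ k) (- T) T
                              (2 * T * (sinh_coef k * (4 * al * T ^ 2) ^ k))).
  { intros k. rewrite <- bessel_coef_prim_pow.
    exact (is_RInt_scal _ _ _ _ _ (is_RInt_pow_sub_sqr T k)). }
  induction N as [| N IH]; cbn [sum_f_R0]; [apply Hterm |].
  rewrite Rmult_plus_distr_l.
  exact (is_RInt_plus _ _ _ _ _ _ IH (Hterm (S N))).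
Qed.

Lemma is_RInt_G_sub_sqr :
  is_RInt (fun x => G al (T ^ 2 - x ^ 2)) (- T) T (2 * T * PSeries sinh_coef (4 * al * T ^ 2)).
Proof.
  pose (partial y := sum_f_R0 (fun k => bessel_coef al k * y ^ k)).
  apply is_RInt_of_uniform_approx with
    (g := fun N x => partial (T ^ 2 - x ^ 2) N)
    (e := fun N => G al (T ^ 2) - partial (T ^ 2) N)
    (I := fun N => 2 * T * sum_f_R0 (fun k => sinh_coef k * (4 * al * T ^ 2) ^ k) N).
  - lra.
  - apply (ex_RInt_continuous (V := R_CompleteNormedModule)). intros x _.
    apply (continuous_comp (fun x => T ^ 2 - x ^ 2) (G al)).
    + apply (ex_derive_continuous (K := R_AbsRing) (V := R_NormedModule)
               (fun x => T ^ 2 - x ^ 2)).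
      auto_derive. easy.
    + apply (ex_derive_continuous (K := R_AbsRing) (V := R_NormedModule)).
      exists (G' al (T ^ 2 - x ^ 2)). now apply is_derive_G.
  - apply is_RInt_bessel_partial.
  - intros N x Hx.
    assert (0 <= T ^ 2 - x ^ 2 <= T ^ 2) by (split; nra).
    pose proof (PSeries_tail_le (bessel_coef al) N _ _
                  (fun n => Rlt_le _ _ (bessel_coef_pos al n hal))
                  (CV_radius_bessel_coef al hal) H).
    unfold partial, G in *. rewrite Rabs_left1; lra.
  - replace (Finite 0) with (Finite (G al (T ^ 2) - G al (T ^ 2))) by (f_equal; ring).
    apply (is_lim_seq_minus' (fun _ => G al (T ^ 2))); [apply is_lim_seq_const |].
    now apply is_lim_seq_PSeries, ex_pseries_infinite_radius, CV_radius_bessel_coef.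
  - apply (is_lim_seq_scal_l _ (2 * T) (PSeries sinh_coef (4 * al * T ^ 2))).
    apply is_lim_seq_PSeries, ex_pseries_infinite_radius, CV_radius_inv_fact_2n.
Qed.

End BesselIntegral.

Lemma sinh_gt_0 (z : R) : 0 < z -> 0 < sinh z.
Proof. intros Hz. rewrite <- sinh_0. now apply sinh_lt. Qed.

Section Density.

Variables c lam : R.
Hypothesis hc : 0 < c.
Hypothesis hlam : 0 < lam.

Definition alpha : R := lam ^ 2 / (4 * c ^ 2).

Lemma alpha_pos : 0 < alpha.
Proof. unfold alpha. apply Rdiv_lt_0_compat; [apply pow_lt |]; nra. Qed.

(* Equal to [p] only where [c^2 t^2 - x^2 >= 0] (elsewhere [sqrt] returns [0]), but smooth. *)
Definition q (x t : R) : R :=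
  lam * G alpha (c ^ 2 * t ^ 2 - x ^ 2) / (2 * c * sinh (lam * t)).

Lemma p_eq_q (x t : R) : Rabs x <= c * t -> p c lam x t = q x t.
Proof.
  intros Hx. unfold p, q.
  rewrite (I0_G alpha alpha_pos); [reflexivity | |].
  - assert (x ^ 2 = Rabs x ^ 2) by (unfold Rabs; destruct Rcase_abs; ring).
    pose proof (Rabs_pos x). nra.
  - unfold alpha. field. lra.
Qed.

Lemma p_nonneg (x t : R) : 0 < t -> - (c * t) < x < c * t -> 0 <= p c lam x t.
Proof.
  intros Ht Hx. rewrite p_eq_q by (apply Rabs_le; lra).
  pose proof (sinh_gt_0 (lam * t) ltac:(nra)).
  pose proof (G_nonneg alpha alpha_pos (c ^ 2 * t ^ 2 - x ^ 2) ltac:(nra)).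
  unfold q. apply Rdiv_le_0_compat; nra.
Qed.

Lemma is_RInt_p (t : R) : 0 < t -> is_RInt (fun x => p c lam x t) (- (c * t)) (c * t) 1.
Proof.
  intros Ht.
  assert (HS : 0 < sinh (lam * t)) by (apply sinh_gt_0; nra).
  set (K := lam / (2 * c * sinh (lam * t))).
  assert (HG := is_RInt_scal _ _ _ K _ (is_RInt_G_sub_sqr alpha (c * t) alpha_pos ltac:(nra))).
  replace (4 * alpha * (c * t) ^ 2) with ((lam * t) ^ 2) in HG by (unfold alpha; field; lra).
  apply (is_RInt_ext (fun x => K * G alpha ((c * t) ^ 2 - x ^ 2))).
  - intros x Hx. rewrite Rmin_left, Rmax_right in Hx by nra.
    enough (E : K * G alpha ((c * t) ^ 2 - x ^ 2) = p c lam x t) by exact E.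
    rewrite p_eq_q by (apply Rabs_le; lra).
    unfold q, K. replace ((c * t) ^ 2) with (c ^ 2 * t ^ 2) by ring. field. lra.
  - replace 1 with (K * (2 * (c * t) * PSeries sinh_coef ((lam * t) ^ 2))); [exact HG |].
    unfold K. rewrite sinh_PSeries in HS |- *. field.
    split; [| lra]. intros H0. rewrite H0 in HS. lra.
Qed.

Definition q_t (x t : R) : R :=
  let Y := c ^ 2 * t ^ 2 - x ^ 2 in
  lam / (2 * c) * (2 * c ^ 2 * t * G' alpha Y * sinh (lam * t)
                   - lam * cosh (lam * t) * G alpha Y) / sinh (lam * t) ^ 2.

Definition q_tt (x t : R) : R :=
  let Y := c ^ 2 * t ^ 2 - x ^ 2 in
  let S := sinh (lam * t) in
  let C := cosh (lam * t) in
  lam / (2 * c) * ((2 * c ^ 2 * G' alpha Y * S + 4 * c ^ 4 * t ^ 2 * G'' alpha Y * S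
                    - lam ^ 2 * S * G alpha Y) * S
                   - 2 * lam * C * (2 * c ^ 2 * t * G' alpha Y * S - lam * C * G alpha Y))
  / S ^ 3.

Definition q_x (x t : R) : R :=
  lam / (2 * c) * (- 2 * x * G' alpha (c ^ 2 * t ^ 2 - x ^ 2)) / sinh (lam * t).

Definition q_xx (x t : R) : R :=
  let Y := c ^ 2 * t ^ 2 - x ^ 2 in
  lam / (2 * c) * (- 2 * G' alpha Y + 4 * x ^ 2 * G'' alpha Y) / sinh (lam * t).

Lemma ex_derive_G (y : R) : ex_derive (G alpha) y.
Proof. eexists. exact (is_derive_G _ alpha_pos y). Qed.

Lemma ex_derive_G' (y : R) : ex_derive (G' alpha) y.
Proof. eexists. exact (is_derive_G' _ alpha_pos y). Qed.

Lemma Derive_G (y : R) : Derive (fun z => G alpha z) y = G' alpha y.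
Proof. exact (is_derive_unique _ _ _ (is_derive_G _ alpha_pos y)). Qed.

Lemma Derive_G' (y : R) : Derive (fun z => G' alpha z) y = G'' alpha y.
Proof. exact (is_derive_unique _ _ _ (is_derive_G' _ alpha_pos y)). Qed.

Section FixedTime.

Variable t : R.
Hypothesis hS : sinh (lam * t) <> 0.

Lemma is_derive_q_t (x : R) : is_derive (fun s => q x s) t (q_t x t).
Proof.
  unfold q, q_t. auto_derive.
  - repeat split; auto using ex_derive_G. apply Rmult_integral_contrapositive; split; lra.
  - replace (c * (c * 1) * (t * (t * 1)) + - (x * (x * 1))) with (c ^ 2 * t ^ 2 - x ^ 2)
      by ring.
    rewrite Derive_G. field. split; lra.
Qed.

Lemma is_derive_q_tt (x : R) : is_derive (fun s => q_t x s) t (q_tt x t).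
Proof.
  unfold q_t, q_tt. auto_derive.
  - repeat split; auto using ex_derive_G, ex_derive_G'.
  - replace (c * (c * 1) * (t * (t * 1)) + - (x * (x * 1))) with (c ^ 2 * t ^ 2 - x ^ 2)
      by ring.
    rewrite Derive_G, Derive_G'. field. split; lra.
Qed.

Lemma is_derive_q_x (x : R) : is_derive (fun y => q y t) x (q_x x t).
Proof.
  unfold q, q_x. auto_derive.
  - apply ex_derive_G.
  - replace (c * (c * 1) * (t * (t * 1)) + - (x * (x * 1))) with (c ^ 2 * t ^ 2 - x ^ 2)
      by ring.
    rewrite Derive_G. field. split; lra.
Qed.

Lemma is_derive_q_xx (x : R) : is_derive (fun y => q_x y t) x (q_xx x t).
Proof.
  unfold q_x, q_xx. auto_derive.
  - apply ex_derive_G'.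
  - replace (c * (c * 1) * (t * (t * 1)) + - (x * (x * 1))) with (c ^ 2 * t ^ 2 - x ^ 2)
      by ring.
    rewrite Derive_G'. field. split; lra.
Qed.

Lemma q_pde (x : R) : q_tt x t + 2 * lam * coth (lam * t) * q_t x t = c ^ 2 * q_xx x t.
Proof.
  unfold q_tt, q_t, q_xx, coth. cbv zeta.
  pose proof (G_ode alpha alpha_pos (c ^ 2 * t ^ 2 - x ^ 2)) as Hode.
  set (Y := c ^ 2 * t ^ 2 - x ^ 2) in *.
  replace (G' alpha Y) with (alpha * G alpha Y - Y * G'' alpha Y) by lra.
  unfold Y, alpha. field. split; lra.
Qed.

End FixedTime.

Lemma is_derive_p_t (x t : R) : 0 < t -> Rabs x < c * t ->
  is_derive (fun s => p c lam x s) t (q_t x t).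
Proof.
  intros Ht Hx.
  apply (is_derive_ext_loc (fun s => q x s)); [| apply is_derive_q_t, Rgt_not_eq, sinh_gt_0; nra].
  apply (locally_interval _ t (Rabs x / c) p_infty); [| easy |].
  - apply Rlt_div_l; lra.
  - intros s Hs _. symmetry. apply p_eq_q.
    apply Rlt_div_l in Hs; simpl in Hs; lra.
Qed.

Lemma is_derive_p_x (x t : R) : 0 < t -> Rabs x < c * t ->
  is_derive (fun y => p c lam y t) x (q_x x t).
Proof.
  intros Ht Hx. apply Rabs_def2 in Hx.
  apply (is_derive_ext_loc (fun y => q y t)); [| apply is_derive_q_x, Rgt_not_eq, sinh_gt_0; nra].
  apply (locally_interval _ x (- (c * t)) (c * t)); simpl; [lra | lra |].
  intros y Hy1 Hy2. symmetry. apply p_eq_q, Rabs_le. lra.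
Qed.

End Density.

Theorem mainTheorem3 (c lam : R) (hc : 0 < c) (hlam : 0 < lam) :
  (forall t : R, 0 < t ->
     (forall x : R, - (c * t) < x < c * t -> 0 <= p c lam x t) /\
     exists pr : Riemann_integrable (fun x => p c lam x t) (- (c * t)) (c * t),
       RiemannInt pr = 1) /\
  exists pt ptt px pxx : R -> R -> R,
    forall t x : R, 0 < t -> Rabs x < c * t ->
      derivable_pt_lim (fun s => p c lam x s) t (pt x t) /\
      derivable_pt_lim (fun s => pt x s) t (ptt x t) /\
      derivable_pt_lim (fun y => p c lam y t) x (px x t) /\
      derivable_pt_lim (fun y => px y t) x (pxx x t) /\
      ptt x t + 2 * lam * coth (lam * t) * pt x t = c ^ 2 * pxx x t.
Proof.
  split.
  - intros t Ht. split; [intros x; now apply p_nonneg |].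
    assert (HI := is_RInt_p c lam hc hlam t Ht).
    exists (ex_RInt_Reals_0 _ _ _ (ex_intro _ _ HI)).
    rewrite <- RInt_Reals. exact (is_RInt_unique _ _ _ _ HI).
  - exists (q_t c lam), (q_tt c lam), (q_x c lam), (q_xx c lam).
    intros t x Ht Hx.
    assert (HS : sinh (lam * t) <> 0) by (apply Rgt_not_eq, sinh_gt_0; nra).
    refine (conj _ (conj _ (conj _ (conj _ _)))).
    + now apply is_derive_Reals, is_derive_p_t.
    + now apply is_derive_Reals, is_derive_q_tt.
    + now apply is_derive_Reals, is_derive_p_x.
    + now apply is_derive_Reals, is_derive_q_xx.
    + now apply q_pde.
Qed.
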